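(* Let $N,n_{\mathrm{el}}\ge1$, masses $m_1,\dots,m_N>0$ and $M=\mathrm{diag}(m_1I_3,\dots,m_NI_3)\in\mathbb{R}^{3N\times3N}$. Let $V_{\mathrm{ext}}:\mathbb{R}^{3N}\to\mathbb{R}$ be continuously differentiable. For $i=1,\dots,n_{\mathrm{el}}$ let $k_i>0$, $l_{0,i}>0$ and constants $a_{ij}\in\mathbb{R}$ ($j=1,\dots,N$). Writing $q=(q_1,\dots,q_N)$, $v=(v_1,\dots,v_N)$ with $q_j,v_j\in\mathbb{R}^3$, define $\tilde C_i(q)=\frac{\bar q_i\cdot\bar q_i}{l_{0,i}^2}$ with $\bar q_i=\sum_{j=1}^Na_{ij}q_j$, and $V_{\mathrm{int}}(C)=\sum_{i=1}^{n_{\mathrm{el}}}\frac{k_il_{0,i}}{4}(C_i-\ln C_i-1)$ for $C\in(0,\infty)^{n_{\mathrm{el}}}$. Let $(q,v,C)$ be a $C^1$ solution on $[t_0,t_{\mathrm{end}}]$ (with $C(t)\in(0,\infty)^{n_{\mathrm{el}}}$) of $$\dot q=v,\qquad M\dot v=-\nabla V_{\mathrm{ext}}(q)-D\tilde C(q)^{\mathrm T}\nabla V_{\mathrm{int}}(C),\qquad \dot C=D\tilde C(q)\,v,$$ where $D\tilde C(q)$ is the Jacobian of $\tilde C$. Let $L=\sum_{k=1}^N q_k\times m_kv_k$ be the total angular momentum. Then $\frac{d}{dt}L=-\sum_{k=1}^N q_k\times\nabla_{q_k}V_{\mathrm{ext}}(q)$. Consequently, if there is a constant vector $b\in\mathbb{R}^3$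 with $-\nabla_{q_k}V_{\mathrm{ext}}(q)=b$ for all $k$ and all $q$, then $\frac{d}{dt}(L\cdot b)=0$.
   Context: $\nabla_{q_k}V_{\mathrm{ext}}(q)\in\mathbb{R}^3$ denotes the $k$-th three-dimensional block of the gradient $\nabla V_{\mathrm{ext}}(q)\in\mathbb{R}^{3N}$. The system is the input-free port-Hamiltonian model of $N$ point masses connected by $n_{\mathrm{el}}$ hyperelastic springs with strains $C$ as independent state. *)

From HB Require Import structures.
From mathcomp Require Import all_boot all_order all_algebra.
From mathcomp Require Import all_classical all_reals all_analysis.
Set Implicit Arguments. Unset Strict Implicit. Unset Printing Implicit Defensive.
Import Order.TTheory GRing.Theory Num.Theory.
Import numFieldNormedType.Exports.
Local Open Scope classical_set_scope.
Local Open Scope ring_scope.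

(* Configurations q = (q_1,...,q_N) in R^{3N} are represented as N x 3
   matrices: row k is q_k in R^3. *)

Section Defs.
Variable R : realType.

Definition dot3 (x y : 'rV[R]_3) : R := \sum_(c < 3) x 0 c * y 0 c.

Definition cross3 (x y : 'rV[R]_3) : 'rV[R]_3 :=
  \row_(c < 3)
    (if c == 0 :> nat then x 0 (inord 1) * y 0 (inord 2) - x 0 (inord 2) * y 0 (inord 1)
     else if c == 1 :> nat then x 0 (inord 2) * y 0 (inord 0) - x 0 (inord 0) * y 0 (inord 2)
     else x 0 (inord 0) * y 0 (inord 1) - x 0 (inord 1) * y 0 (inord 0)).

(* gradient of f : R^{3N} -> R, via partial derivatives; entry (k,c) is
   d f / d q_{k,c}, so row k is the block nabla_{q_k} f *)
Definition gradM (N : nat) (f : 'M[R]_(N, 3) -> R) (q : 'M[R]_(N, 3)) : 'M[R]_(N, 3) :=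
  \matrix_(k < N, c < 3) ('D_(delta_mx k c) f q).

Definition gradV (n : nat) (g : 'rV[R]_n -> R) (C : 'rV[R]_n) : 'rV[R]_n :=
  \row_(i < n) ('D_(delta_mx 0 i) g C).

Definition qbar (nel N : nat) (a : 'M[R]_(nel, N)) (q : 'M[R]_(N, 3)) (i : 'I_nel)
  : 'rV[R]_3 := \sum_(j < N) a i j *: row j q.

Definition Ctilde (nel N : nat) (a : 'M[R]_(nel, N)) (l0 : 'I_nel -> R)
  (q : 'M[R]_(N, 3)) : 'rV[R]_nel :=
  \row_(i < nel) (dot3 (qbar a q i) (qbar a q i) / (l0 i ^+ 2)).

Definition jacCt (nel N : nat) (a : 'M[R]_(nel, N)) (l0 : 'I_nel -> R)
  (q : 'M[R]_(N, 3)) (i : 'I_nel) (k : 'I_N) (c : 'I_3) : R :=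
  'D_(delta_mx k c) (fun x => Ctilde a l0 x 0 i) q.

Definition jacCt_mul (nel N : nat) (a : 'M[R]_(nel, N)) (l0 : 'I_nel -> R)
  (q v : 'M[R]_(N, 3)) : 'rV[R]_nel :=
  \row_(i < nel) \sum_(k < N) \sum_(c < 3) jacCt a l0 q i k c * v k c.

(* D tilde C(q)^T w, reshaped as an N x 3 matrix *)
Definition jacCt_tmul (nel N : nat) (a : 'M[R]_(nel, N)) (l0 : 'I_nel -> R)
  (q : 'M[R]_(N, 3)) (w : 'rV[R]_nel) : 'M[R]_(N, 3) :=
  \matrix_(k < N, c < 3) \sum_(i < nel) jacCt a l0 q i k c * w 0 i.

Definition Vint (nel : nat) (kk l0 : 'I_nel -> R) (C : 'rV[R]_nel) : R :=
  \sum_(i < nel) (kk i * l0 i / 4) * (C 0 i - ln (C 0 i) - 1).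

(* M X for M = diag(m_1 I_3, ..., m_N I_3), X in R^{3N} as N x 3 matrix *)
Definition massmul (N : nat) (m : 'I_N -> R) (X : 'M[R]_(N, 3)) : 'M[R]_(N, 3) :=
  \matrix_(k < N, c < 3) (m k * X k c).

Definition angmom (N : nat) (m : 'I_N -> R) (q v : 'M[R]_(N, 3)) : 'rV[R]_3 :=
  \sum_(k < N) cross3 (row k q) (m k *: row k v).

(* derivative of f : R -> V within the set I at every point of I
   (one-sided at endpoints of an interval) *)
Definition has_deriv_on (V : normedModType R) (I : set R) (f f' : R -> V) : Prop :=
  forall t, I t ->
    (fun h : R => h^-1 *: (f (t + h) - f t)) @ within (fun h => I (t + h)) ((0 : R)^')
      --> f' t.

End Defs.

From HB Require Import structures.
From mathcomp Require Import all_boot all_order all_algebra.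
From mathcomp Require Import all_classical all_reals all_analysis.
From mathcomp Require Import ring.
Set Implicit Arguments. Unset Strict Implicit. Unset Printing Implicit Defensive.
Import Order.TTheory GRing.Theory Num.Theory.
Import numFieldNormedType.Exports.
Local Open Scope classical_set_scope.
Local Open Scope ring_scope.

(* Along the solution, L' = sum_k v_k x m_k v_k + sum_k q_k x (M v')_k, and the
   first sum vanishes, so L' is the total torque of the forces M v'.  Since
   dC~_i/dq_k = 2 a_ik qbar_i / l0_i^2, spring i pulls particle k along a_ik qbar_i,
   so its torque is a multiple of sum_k a_ik q_k x qbar_i = qbar_i x qbar_i = 0
   and only the external torque remains.  If every external force equals b, this
   torque is (sum_k q_k) x b, which is orthogonal to b. *)

Section HasDerivOn.
Variables (R : realType) (I : set R).
Implicit Types V : normedModType R.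

Lemma has_deriv_on_ext V (f f' g' : R -> V) :
  has_deriv_on I f f' -> (forall t, I t -> f' t = g' t) -> has_deriv_on I f g'.
Proof. by move=> df e t It; rewrite -e //; exact: df. Qed.

Lemma has_deriv_on_cst V (c : V) : has_deriv_on I (fun=> c) (fun=> 0).
Proof.
move=> t _; rewrite (_ : (fun h : R => _) = fun=> 0); first exact: cvg_cst.
by apply/funext => h; rewrite subrr scaler0.
Qed.

Lemma has_deriv_onD V (f g f' g' : R -> V) :
  has_deriv_on I f f' -> has_deriv_on I g g' ->
  has_deriv_on I (fun t => f t + g t) (fun t => f' t + g' t).
Proof.
move=> df dg t It.
rewrite (_ : (fun h : R => _) =
    fun h => h^-1 *: (f (t + h) - f t) + h^-1 *: (g (t + h) - g t)).
  exact: cvgD (df t It) (dg t It).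
by apply/funext => h; rewrite -scalerDr opprD addrACA.
Qed.

Lemma has_deriv_onB V (f g f' g' : R -> V) :
  has_deriv_on I f f' -> has_deriv_on I g g' ->
  has_deriv_on I (fun t => f t - g t) (fun t => f' t - g' t).
Proof.
move=> df dg t It.
rewrite (_ : (fun h : R => _) =
    fun h => h^-1 *: (f (t + h) - f t) - h^-1 *: (g (t + h) - g t)).
  exact: cvgB (df t It) (dg t It).
by apply/funext => h; rewrite -scalerBr !opprD addrACA.
Qed.

Lemma has_deriv_onZ V (c : R) (f f' : R -> V) :
  has_deriv_on I f f' -> has_deriv_on I (fun t => c *: f t) (fun t => c *: f' t).
Proof.
move=> df t It.
rewrite (_ : (fun h : R => _) = fun h => c *: (h^-1 *: (f (t + h) - f t))).
  exact: cvgZ (cvg_cst c) (df t It).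
by apply/funext => h; rewrite -scalerBr !scalerA mulrC.
Qed.

Lemma has_deriv_onZl V (f f' : R -> R) (v : V) :
  has_deriv_on I f f' -> has_deriv_on I (fun t => f t *: v) (fun t => f' t *: v).
Proof.
move=> df t It.
rewrite (_ : (fun h : R => _) = fun h => (h^-1 *: (f (t + h) - f t)) *: v).
  exact: cvgZ (df t It) (cvg_cst v).
by apply/funext => h; rewrite -scalerBl scalerA.
Qed.

Lemma has_deriv_on_sum V (J : Type) (r : seq J) (f f' : J -> R -> V) :
  (forall j, has_deriv_on I (f j) (f' j)) ->
  has_deriv_on I (fun t => \sum_(j <- r) f j t) (fun t => \sum_(j <- r) f' j t).
Proof.
move=> df; elim: r => [|j r IHr].
  rewrite (_ : (fun t => _) = fun=> 0); last by apply/funext => t; rewrite big_nil.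
  by apply: has_deriv_on_ext (has_deriv_on_cst (0 : V)) _ => t _; rewrite big_nil.
rewrite (_ : (fun t => _) = fun t => f j t + \sum_(i <- r) f i t).
  by apply: has_deriv_on_ext (has_deriv_onD (df j) IHr) _ => t _; rewrite big_cons.
by apply/funext => t; rewrite big_cons.
Qed.

Lemma has_deriv_on_cvg V (f f' : R -> V) t : has_deriv_on I f f' -> I t ->
  f (t + h) @[h --> within (fun h => I (t + h)) 0^'] --> f t.
Proof.
move=> df It.
have h_cvg0 : h @[h --> within (fun h => I (t + h)) 0^'] --> (0 : R).
  exact: (@cvg_within_filter _ _ id 0^' _ _ _ (@nbhs_dnbhs R 0)).
have f_cvg := cvgD (cvg_cst (f t)) (cvgZ h_cvg0 (df t It)).
rewrite scale0r addr0 in f_cvg.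
suff f_near : \forall h \near within (fun h => I (t + h)) 0^',
    f t + h *: (h^-1 *: (f (t + h) - f t)) = f (t + h).
  by apply: cvg_trans (near_eq_cvg f_near) _; apply: f_cvg.
rewrite near_withinE; near=> h => _.
have h_neq0 : h != 0 by near: h; exact: nbhs_dnbhs_neq.
by rewrite scalerA mulfV // scale1r addrC subrK.
Unshelve. all: by end_near.
Qed.

Lemma has_deriv_onM (f g f' g' : R -> R) :
  has_deriv_on I f f' -> has_deriv_on I g g' ->
  has_deriv_on I (fun t => f t * g t) (fun t => f' t * g t + f t * g' t).
Proof.
move=> df dg t It.
rewrite (_ : (fun h : R => _) = fun h =>
    h^-1 *: (f (t + h) - f t) * g (t + h) + f t * (h^-1 *: (g (t + h) - g t))).
  apply: cvgD; first exact: cvgM (df t It) (has_deriv_on_cvg dg It).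
  exact: cvgM (cvg_cst _) (dg t It).
by apply/funext => h; rewrite /GRing.scale /=; ring.
Qed.

Lemma has_deriv_on_entry m n (F F' : R -> 'M[R]_(m, n)) i j :
  has_deriv_on I F F' -> has_deriv_on I (fun t => F t i j) (fun t => F' t i j).
Proof.
move=> dF t It.
rewrite (_ : (fun h : R => _) =
    (fun A : 'M[R]_(m, n) => A i j) \o fun h => h^-1 *: (F (t + h) - F t)).
  exact: continuous_cvg (@coord_continuous R m n i j (F' t)) (dF t It).
by apply/funext => h /=; rewrite !mxE.
Qed.

Lemma has_deriv_on_matrix m n (F F' : R -> 'M[R]_(m, n)) :
  (forall i j, has_deriv_on I (fun t => F t i j) (fun t => F' t i j)) ->
  has_deriv_on I F F'.
Proof.
move=> dF; have -> : F = fun t => \sum_i \sum_j F t i j *: delta_mx i j.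
  by apply/funext => t; rewrite -matrix_sum_delta.
have dsum : has_deriv_on I (fun t => \sum_i \sum_j F t i j *: delta_mx i j)
    (fun t => \sum_i \sum_j F' t i j *: delta_mx i j).
  by do 2 apply: has_deriv_on_sum => ?; exact: has_deriv_onZl.
by apply: has_deriv_on_ext dsum _ => t _; rewrite -matrix_sum_delta.
Qed.

Lemma has_deriv_on_row m n (F F' : R -> 'M[R]_(m, n)) k :
  has_deriv_on I F F' -> has_deriv_on I (fun t => row k (F t)) (fun t => row k (F' t)).
Proof.
move=> dF; apply: has_deriv_on_matrix => i j.
have -> : (fun t => row k (F t) i j) = fun t => F t k j.
  by apply/funext => t; rewrite mxE.
by apply: has_deriv_on_ext (has_deriv_on_entry (i := k) (j := j) dF) _ => t _; rewrite mxE.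
Qed.

End HasDerivOn.

Section CrossProduct.
Variable R : realType.
Implicit Types x y z : 'rV[R]_3.

Lemma sum_ord3 (f : 'I_3 -> R) : \sum_c f c = f (inord 0) + f (inord 1) + f (inord 2).
Proof.
rewrite !big_ord_recr big_ord0 /= add0r.
by congr (f _ + f _ + f _); apply/val_inj; rewrite /= inordK.
Qed.

Lemma cross3E x y c :
  cross3 x y 0 c = x 0 (inord (c.+1 %% 3)) * y 0 (inord (c.+2 %% 3))
                 - x 0 (inord (c.+2 %% 3)) * y 0 (inord (c.+1 %% 3)).
Proof. by rewrite mxE; case: c => -[|[|[|//]]]. Qed.

Lemma cross3Dr x y z : cross3 x (y + z) = cross3 x y + cross3 x z.
Proof. by apply/rowP => c; rewrite !(cross3E, mxE); ring. Qed.

Lemma cross3Zr (s : R) x y : cross3 x (s *: y) = s *: cross3 x y.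
Proof. by apply/rowP => c; rewrite !(cross3E, mxE); ring. Qed.

Lemma cross3Zl (s : R) x y : cross3 (s *: x) y = s *: cross3 x y.
Proof. by apply/rowP => c; rewrite !(cross3E, mxE); ring. Qed.

Lemma cross3Nr x y : cross3 x (- y) = - cross3 x y.
Proof. by apply/rowP => c; rewrite !(cross3E, mxE); ring. Qed.

Lemma cross3Br x y z : cross3 x (y - z) = cross3 x y - cross3 x z.
Proof. by rewrite cross3Dr cross3Nr. Qed.

Lemma cross3xx x : cross3 x x = 0.
Proof. by apply/rowP => c; rewrite !(cross3E, mxE); ring. Qed.

Lemma cross3_sumr (J : Type) (r : seq J) (f : J -> 'rV[R]_3) x :
  cross3 x (\sum_(j <- r) f j) = \sum_(j <- r) cross3 x (f j).
Proof.
apply: (big_morph _ (cross3Dr x)).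
by apply/rowP => c; rewrite !(cross3E, mxE); ring.
Qed.

Lemma cross3_suml (J : Type) (r : seq J) (f : J -> 'rV[R]_3) y :
  cross3 (\sum_(j <- r) f j) y = \sum_(j <- r) cross3 (f j) y.
Proof.
apply: (big_morph (fun x => cross3 x y)) => [x z|];
  by apply/rowP => c; rewrite !(cross3E, mxE); ring.
Qed.

Lemma dot3_suml (J : Type) (r : seq J) (f : J -> 'rV[R]_3) y :
  dot3 (\sum_(j <- r) f j) y = \sum_(j <- r) dot3 (f j) y.
Proof. by rewrite /dot3 exchange_big /=; apply: eq_bigr => c _; rewrite summxE mulr_suml. Qed.

Lemma dot3_cross3l x y : dot3 (cross3 x y) y = 0.
Proof. by rewrite /dot3 sum_ord3 !cross3E !inordK //=; ring. Qed.

Variable I : set R.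

Lemma has_deriv_on_cross3 (x y x' y' : R -> 'rV[R]_3) :
  has_deriv_on I x x' -> has_deriv_on I y y' ->
  has_deriv_on I (fun t => cross3 (x t) (y t))
    (fun t => cross3 (x' t) (y t) + cross3 (x t) (y' t)).
Proof.
move=> dx dy; apply: has_deriv_on_matrix => i c; rewrite [i]ord1.
set c1 : 'I_3 := inord (c.+1 %% 3); set c2 : 'I_3 := inord (c.+2 %% 3).
have -> : (fun t => cross3 (x t) (y t) 0 c)
    = fun t => x t 0 c1 * y t 0 c2 - x t 0 c2 * y t 0 c1.
  by apply/funext => t; rewrite cross3E.
have entry j (F F' : R -> 'rV[R]_3) : has_deriv_on I F F' ->
    has_deriv_on I (fun t => F t 0 j) (fun t => F' t 0 j).
  exact: has_deriv_on_entry.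
apply: has_deriv_on_ext
  (has_deriv_onB (has_deriv_onM (entry c1 _ _ dx) (entry c2 _ _ dy))
                 (has_deriv_onM (entry c2 _ _ dx) (entry c1 _ _ dy))) _.
by move=> t _; rewrite !(cross3E, mxE); ring.
Qed.

End CrossProduct.

Section Springs.
Variables (R : realType) (nel N : nat) (a : 'M[R]_(nel, N)) (l0 : 'I_nel -> R).

Lemma qbarDZ (s : R) (u x : 'M[R]_(N, 3)) i :
  qbar a (s *: u + x) i = s *: qbar a u i + qbar a x i.
Proof.
rewrite /qbar scaler_sumr -big_split; apply: eq_bigr => j _ /=.
by apply/rowP => c; rewrite !mxE; ring.
Qed.

Lemma qbar_delta i k c : qbar a (delta_mx k c) i = a i k *: delta_mx 0 c.
Proof.
rewrite /qbar (bigD1 k) //= big1 ?addr0 => [|j /negbTE jk].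
  by congr (_ *: _); apply/rowP => c'; rewrite !mxE eqxx.
by apply/rowP => c'; rewrite !mxE jk mulr0.
Qed.

Lemma dot3DZ_self (s : R) (u x : 'rV[R]_3) :
  dot3 (s *: u + x) (s *: u + x) = dot3 x x + s * (2 * dot3 x u + s * dot3 u u).
Proof.
rewrite /dot3 !mulr_sumr -big_split mulr_sumr -!big_split /=.
by apply: eq_bigr => c _; rewrite !mxE; ring.
Qed.

Lemma dot3Zdelta (x : 'rV[R]_3) (s : R) c : dot3 x (s *: delta_mx 0 c) = s * x 0 c.
Proof.
rewrite /dot3 (bigD1 c) //= big1 ?addr0 => [|j /negbTE jc].
  by rewrite !mxE !eqxx mulr1 mulrC.
by rewrite !mxE jc mulr0 mulr0.
Qed.

Lemma derive_Ctilde q u i :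
  'D_u (fun x => Ctilde a l0 x 0 i) q
  = 2 * dot3 (qbar a q i) (qbar a u i) / l0 i ^+ 2.
Proof.
set P := qbar a q i; set U := qbar a u i.
apply: cvg_lim => //.
have lim_cvg : (2 * dot3 P U + h * dot3 U U) / l0 i ^+ 2 @[h --> 0^']
    --> 2 * dot3 P U / l0 i ^+ 2.
  apply: cvgMr_tmp; rewrite -[X in _ --> X]addr0.
  apply: cvgD; first exact: cvg_cst.
  rewrite -[X in _ --> X](mul0r (dot3 U U)); apply: cvgMr_tmp.
  exact: nbhs_dnbhs.
apply: cvg_trans (near_eq_cvg _) lim_cvg.
near=> h.
have h_neq0 : h != 0 by near: h; exact: nbhs_dnbhs_neq.
rewrite /= !mxE qbarDZ dot3DZ_self -/P -/U /GRing.scale /=.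
by rewrite -mulrBl [dot3 P P + _]addrC addrK !mulrA mulVf ?mul1r.
Unshelve. all: by end_near.
Qed.

Lemma jacCtE q i k c :
  jacCt a l0 q i k c = 2 * a i k * qbar a q i 0 c / l0 i ^+ 2.
Proof. by rewrite /jacCt derive_Ctilde qbar_delta dot3Zdelta mulrA. Qed.

Lemma row_jacCt_tmul q w k :
  row k (jacCt_tmul a l0 q w)
  = \sum_i (2 * w 0 i / l0 i ^+ 2 * a i k) *: qbar a q i.
Proof.
apply/rowP => c; rewrite !mxE summxE; apply: eq_bigr => i _.
by rewrite jacCtE !mxE; ring.
Qed.

End Springs.

Section AngularMomentum.
Variables (R : realType) (N : nat).
Implicit Types (q F G : 'M[R]_(N, 3)).

Definition torque q F : 'rV[R]_3 := \sum_(k < N) cross3 (row k q) (row k F).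

Lemma torqueB q F G : torque q (F - G) = torque q F - torque q G.
Proof. by rewrite /torque -sumrB; apply: eq_bigr => k _; rewrite linearB cross3Br. Qed.

Lemma torqueN q F : torque q (- F) = - torque q F.
Proof. by rewrite /torque -sumrN; apply: eq_bigr => k _; rewrite linearN cross3Nr. Qed.

Lemma torque_jacCt_tmul nel (a : 'M[R]_(nel, N)) l0 q w :
  torque q (jacCt_tmul a l0 q w) = 0.
Proof.
rewrite /torque; under eq_bigr do rewrite row_jacCt_tmul cross3_sumr.
rewrite exchange_big /=; apply: big1 => i _.
under eq_bigr do rewrite cross3Zr -scalerA -cross3Zl.
by rewrite -scaler_sumr -cross3_suml -/(qbar a q i) cross3xx scaler0.
Qed.

Lemma dot3_torque_rows q F b : (forall k, row k F = b) -> dot3 (torque q F) b = 0.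
Proof. by move=> Fb; rewrite dot3_suml big1 // => k _; rewrite Fb dot3_cross3l. Qed.

Lemma row_massmul (m : 'I_N -> R) F k : row k (massmul m F) = m k *: row k F.
Proof. by apply/rowP => c; rewrite !mxE. Qed.

Variable I : set R.

Lemma has_deriv_on_angmom (m : 'I_N -> R) (q v vd : R -> 'M[R]_(N, 3)) :
  has_deriv_on I q v -> has_deriv_on I v vd ->
  has_deriv_on I (fun t => angmom m (q t) (v t)) (fun t => torque (q t) (massmul m (vd t))).
Proof.
move=> dq dv.
have dL : has_deriv_on I (fun t => angmom m (q t) (v t)) (fun t => \sum_k
    (cross3 (row k (v t)) (m k *: row k (v t)) + cross3 (row k (q t)) (m k *: row k (vd t)))).
  apply: has_deriv_on_sum => k.
  exact: has_deriv_on_cross3 (has_deriv_on_row (k := k) dq)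
    (has_deriv_onZ (c := m k) (has_deriv_on_row (k := k) dv)).
apply: has_deriv_on_ext dL _ => t _; apply: eq_bigr => k _.
by rewrite cross3Zr cross3xx scaler0 add0r row_massmul.
Qed.

Lemma has_deriv_on_dot3l (x x' : R -> 'rV[R]_3) b :
  has_deriv_on I x x' -> has_deriv_on I (fun t => dot3 (x t) b) (fun t => dot3 (x' t) b).
Proof.
move=> dx; apply: has_deriv_on_sum => c.
exact: has_deriv_onZl (has_deriv_on_entry (i := 0) (j := c) dx).
Qed.

End AngularMomentum.

Theorem mainTheorem2 (R : realType) (N nel : nat)
  (m : 'I_N -> R) (Vext : 'M[R]_(N, 3) -> R)
  (kk l0 : 'I_nel -> R) (a : 'M[R]_(nel, N))
  (t0 tend : R)
  (q v vd : R -> 'M[R]_(N, 3)) (C Cd : R -> 'rV[R]_nel) :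
  (0 < N)%N -> (0 < nel)%N ->
  (forall k, 0 < m k) ->
  (* V_ext is continuously differentiable *)
  (forall x, differentiable Vext x) ->
  (forall k c, continuous (fun x => 'D_(delta_mx k c) Vext x)) ->
  (forall i, 0 < kk i) -> (forall i, 0 < l0 i) ->
  (* (q, v, C) is a C^1 solution on [t0, tend] *)
  {within `[t0, tend], continuous q} ->
  {within `[t0, tend], continuous v} ->
  {within `[t0, tend], continuous vd} ->
  {within `[t0, tend], continuous C} ->
  {within `[t0, tend], continuous Cd} ->
  has_deriv_on `[t0, tend] q v ->
  has_deriv_on `[t0, tend] v vd ->
  has_deriv_on `[t0, tend] C Cd ->
  (forall t, t \in `[t0, tend] -> forall i, 0 < C t 0 i) ->
  (forall t, t \in `[t0, tend] ->
     massmul m (vd t) = - gradM Vext (q t) - jacCt_tmul a l0 (q t) (gradV (Vint kk l0) (C t))) ->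
  (forall t, t \in `[t0, tend] -> Cd t = jacCt_mul a l0 (q t) (v t)) ->
  has_deriv_on `[t0, tend] (fun t => angmom m (q t) (v t))
    (fun t => - \sum_(k < N) cross3 (row k (q t)) (row k (gradM Vext (q t))))
  /\
  (forall b : 'rV[R]_3,
     (forall k x, - row k (gradM Vext x) = b) ->
     has_deriv_on `[t0, tend] (fun t => dot3 (angmom m (q t) (v t)) b) (fun _ => 0)).
Proof.
move=> _ _ _ _ _ _ _ _ _ _ _ _ dq dv _ _ motion _.
have dL : has_deriv_on `[t0, tend] (fun t => angmom m (q t) (v t))
    (fun t => - torque (q t) (gradM Vext (q t))).
  apply: has_deriv_on_ext (has_deriv_on_angmom (m := m) dq dv) _ => t It.
  by rewrite motion ?inE // torqueB torqueN torque_jacCt_tmul subr0.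
split=> // b grad_b.
apply: has_deriv_on_ext (has_deriv_on_dot3l (b := b) dL) _ => t _.
by rewrite -torqueN dot3_torque_rows // => k; rewrite linearN grad_b.
Qed.
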